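(* Let $U$ be a Hilbert space, $H: U \rightrightarrows U$ with $H^{-1}(0)\ne\emptyset$, and for each $i\in\mathbb{N}$ let $V'_{i+1}: U \to U$ and $M_{i+1}, W_{i+1}, Z_{i+1}, \Xi_{i+1} \in \mathcal{L}(U;U)$ with $Z_{i+1}M_{i+1}$ self-adjoint and $Z_{i+1}M_{i+1} \ge 0$. Let $(u^i)_{i\in\mathbb{N}}\subset U$ satisfy \[ 0 \in W_{i+1}H(u^{i+1}) + V'_{i+1}(u^{i+1}) + M_{i+1}(u^{i+1}-u^i) \quad (i\in\mathbb{N}). \] Let $\hat u \in H^{-1}(0)$ and suppose that for every $i$, $H$ is $(Z_{i+1}\Xi_{i+1}, 2Z_{i+1}W_{i+1}, Z_{i+2}M_{i+2})$-partially strongly submonotone at $(\hat u, 0)$, with a neighbourhood $\mathcal{U}$ of $\hat u$ (common to all $i$). Suppose also that for every $i\in\mathbb{N}$ there is $\Delta_{i+1}\in\mathbb{R}$ such that for all $u^* \in H^{-1}(0)$, \[ \tfrac12\|u^{i+1}-u^i\|^2_{Z_{i+1}M_{i+1}} + \tfrac12\|u^{i+1}-u^*\|^2_{Z_{i+1}(M_{i+1}+\Xi_{i+1})-Z_{i+2}M_{i+2}} + \langle V'_{i+1}(u^{i+1}), u^{i+1}-u^*\rangle_{Z_{i+1}} \ge -\Delta_{i+1}. \] Then for every $N\ge1$ with $\{u^0,\dots,u^N\}\subset\mathcal{U}$, \[ \tfrac12 \operatorname{dist}^2_{Z_{N+1}M_{N+1}}(u^N, H^{-1}(0)) \le \tfrac12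 \operatorname{dist}^2_{Z_1M_1}(u^0, H^{-1}(0)) + \sum_{i=0}^{N-1}\Delta_{i+1}. \]
   Context: For $T\in\mathcal{L}(U;U)$: $\langle x,z\rangle_T:=\langle Tx,z\rangle$, $\|x\|_T^2:=\langle Tx,x\rangle$, $\operatorname{dist}_T^2(z,A):=\inf_{u\in A}\|z-u\|_T^2$; $T\ge S$ means $T-S$ is positive semidefinite. For $T: U\rightrightarrows U$, $T^{-1}(w):=\{u : w\in T(u)\}$. Definition (partial strong submonotonicity): for $\Xi,N,M\in\mathcal{L}(U;U)$ with $M\ge0$, $T:U\rightrightarrows U$ is $(\Xi,N,M)$-partially strongly submonotone at $(\hat u,\hat w)\in\operatorname{graph}T$ if there is a neighbourhood $\mathcal{U}\ni\hat u$ such that \[ \inf_{u^*\in T^{-1}(\hat w)}\big(\langle w-\hat w, u-u^*\rangle_N + \|u-u^*\|^2_{M-\Xi}\big) \ge \operatorname{dist}^2_M(u, T^{-1}(\hat w)) \quad (u\in\mathcal{U},\ w\in T(u)). \] *)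

From HB Require Import structures.
From mathcomp Require Import all_boot all_order all_algebra.
From mathcomp Require Import all_classical all_reals all_analysis.
Set Implicit Arguments. Unset Strict Implicit. Unset Printing Implicit Defensive.
Import Order.TTheory GRing.Theory Num.Theory.
Import numFieldNormedType.Exports.
Local Open Scope classical_set_scope.
Local Open Scope ring_scope.

Section Defs.
Context {R : realType} {U : completeNormedModType R}.

(* ip is a (real) inner product inducing the norm of U; together with the
   completeness of U this makes (U, ip) a real Hilbert space. *)
Definition is_inner_product (ip : U -> U -> R) : Prop :=
  [/\ (forall x y, ip x y = ip y x),
      (forall x y z, ip (x + y) z = ip x z + ip y z),
      (forall (a : R) x y, ip (a *: x) y = a * ip x y)
    & (forall x, ip x x = `|x| ^+ 2)].

Definition bounded_linear (T : U -> U) : Prop :=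
  linear T /\ continuous T.

Definition ipT (ip : U -> U -> R) (T : U -> U) (x z : U) : R := ip (T x) z.

Definition sqnormT (ip : U -> U -> R) (T : U -> U) (x : U) : R := ip (T x) x.

Definition sqdistT (ip : U -> U -> R) (T : U -> U) (z : U) (A : set U) : \bar R :=
  ereal_inf [set (sqnormT ip T (z - u))%:E | u in A].

Definition op_ge (ip : U -> U -> R) (T S : U -> U) : Prop :=
  forall x, 0 <= ip (T x - S x) x.

Definition self_adjoint (ip : U -> U -> R) (T : U -> U) : Prop :=
  forall x y, ip (T x) y = ip x (T y).

Definition inv_set (T : U -> set U) (w : U) : set U := [set u | T u w].

Definition psub_at (ip : U -> U -> R) (T : U -> set U) (Xi N M : U -> U)
    (uh wh : U) (Uset : set U) : Prop :=
  [/\ op_ge ip M (fun _ => 0), T uh wh, nbhs uh Uset &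
  forall u w, Uset u -> T u w ->
    (sqdistT ip M u (inv_set T wh) <=
     ereal_inf [set (ipT ip N (w - wh) (u - us)
                     + sqnormT ip (fun x => M x - Xi x) (u - us))%:E
               | us in inv_set T wh])%E].

Definition partially_strongly_submonotone (ip : U -> U -> R) (T : U -> set U)
    (Xi N M : U -> U) (uh wh : U) : Prop :=
  exists Uset : set U, psub_at ip T Xi N M uh wh Uset.

End Defs.

From HB Require Import structures.
From mathcomp Require Import all_boot all_order all_algebra.
From mathcomp Require Import all_classical all_reals all_analysis.
From mathcomp Require Import lra.
Set Implicit Arguments. Unset Strict Implicit. Unset Printing Implicit Defensive.
Import Order.TTheory GRing.Theory Num.Theory.
Import numFieldNormedType.Exports.
Local Open Scope classical_set_scope.
Local Open Scope ring_scope.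

(* Partial strong submonotonicity at u^{i+1} bounds the squared distance in
   the metric Z_{i+2} M_{i+2} by the testing term; substituting W_{i+1} h from
   the inclusion and applying the three-point identity for the self-adjoint
   Z_{i+1} M_{i+1} turns that term into |u^i - u*|^2_{Z_{i+1} M_{i+1}} plus a
   quantity bounded by 2 Delta_{i+1}.  Taking the infimum over u* in H^{-1}(0)
   and telescoping over i < N gives the claim. *)

Section ExtendedReals.
Context {R : realType}.
Local Open Scope ereal_scope.

Lemma le_ereal_infDr (a : \bar R) (c : R) (S : set (\bar R)) :
  (forall x, S x -> a <= x + c%:E) -> a <= ereal_inf S + c%:E.
Proof.
move=> aS; rewrite -leeBlDr //; apply: le_ereal_inf_tmp => x Sx.
by rewrite leeBlDr // aS.
Qed.

Lemma lee_telescope (D : nat -> \bar R) (c : nat -> R) (N : nat) :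
  (forall k, (k < N)%N -> D k.+1 <= D k + (c k)%:E) ->
  D N <= D 0%N + (\sum_(0 <= k < N) c k)%:E.
Proof.
elim: N => [|N IH] DS; first by rewrite big_geq // adde0.
apply: le_trans (DS N (ltnSn N)) _.
rewrite big_nat_recr //= EFinD addeA leeD2r // IH // => k kN.
by rewrite DS // ltnS ltnW.
Qed.

End ExtendedReals.

Section LinearMaps.
Context {R : realType} {U : completeNormedModType R}.

Lemma linear_funD (f : U -> U) : linear f -> {morph f : x y / x + y}.
Proof. by move=> lf x y; have := lf 1 x y; rewrite !scale1r. Qed.

Lemma linear_funN (f : U -> U) : linear f -> {morph f : x / - x}.
Proof.
move=> lf x; have f0 : f 0 = 0.
  by have := lf (-1) x x; rewrite !scaleN1r !addNr.
by have := lf (-1) x 0; rewrite !scaleN1r !addr0 f0 addr0.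
Qed.

Lemma linear_funB (f : U -> U) : linear f -> {morph f : x y / x - y}.
Proof. by move=> lf x y; rewrite linear_funD // linear_funN. Qed.

Lemma linear_comp (f g : U -> U) : linear f -> linear g -> linear (f \o g).
Proof. by move=> lf lg a x y; rewrite /= lg lf. Qed.

End LinearMaps.

Section InnerProduct.
Context {R : realType} {U : completeNormedModType R}.
Variable ip : U -> U -> R.
Hypothesis ip_inner : is_inner_product ip.

Lemma ipC x y : ip x y = ip y x.
Proof. by case: ip_inner. Qed.

Lemma ipDl x y z : ip (x + y) z = ip x z + ip y z.
Proof. by case: ip_inner. Qed.

Lemma ipZl (a : R) x y : ip (a *: x) y = a * ip x y.
Proof. by case: ip_inner. Qed.

Lemma ipNl x y : ip (- x) y = - ip x y.
Proof. by rewrite -scaleN1r ipZl mulN1r. Qed.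

Lemma ipBl x y z : ip (x - y) z = ip x z - ip y z.
Proof. by rewrite ipDl ipNl. Qed.

Lemma ipBr x y z : ip z (x - y) = ip z x - ip z y.
Proof. by rewrite ipC ipBl !(ipC z). Qed.

Lemma sqnormT_three_point (T : U -> U) x y :
  self_adjoint ip T -> linear T ->
  2 * ip (T (x - y)) x = sqnormT ip T (x - y) + sqnormT ip T x - sqnormT ip T y.
Proof.
move=> sT lT; rewrite /sqnormT linear_funB // !(ipBl, ipBr).
have -> : ip (T y) x = ip (T x) y by rewrite sT ipC.
lra.
Qed.

Lemma sqdistT_step (H : U -> set U) (M W Z Xi K : U -> U) (v u u' uh : U)
    (Uset : set U) (Delta : R) :
  linear M -> linear Z -> self_adjoint ip (Z \o M) ->
  (exists2 h, H u' h & W h + v + M (u' - u) = 0) ->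
  psub_at ip H (Z \o Xi) (fun x => 2 *: Z (W x)) K uh 0 Uset -> Uset u' ->
  (forall us, inv_set H 0 us ->
     2^-1 * sqnormT ip (Z \o M) (u' - u)
     + 2^-1 * sqnormT ip (fun x => Z (M x + Xi x) - K x) (u' - us)
     + ipT ip Z v (u' - us) >= - Delta) ->
  (sqdistT ip K u' (inv_set H 0%R)
   <= sqdistT ip (Z \o M) u (inv_set H 0%R) + (2 * Delta)%:E)%E.
Proof.
move=> lM lZ sZM [h Hh inclusion] [_ _ _ psub] Uu' energy.
apply: le_ereal_infDr => _ [us Sus <-].
apply: le_trans (psub _ _ Uu' Hh) _.
apply: le_trans (ereal_inf_lbound _) _; first by exists us.
rewrite -EFinD lee_fin /ipT subr0.
have ZWh : Z (W h) = - Z v - Z (M (u' - u)).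
  move/eqP: inclusion; rewrite -addrA addr_eq0 => /eqP ->.
  by rewrite (linear_funN lZ) (linear_funD lZ) opprD.
have three_point := sqnormT_three_point (u' - us) (u - us) sZM
  (linear_comp lZ lM).
rewrite opprB addrA subrK /= in three_point.
(* twice the energy bound at us, plus the three-point identity *)
move: (energy us Sus) three_point; rewrite /sqnormT /ipT /= ZWh.
rewrite (linear_funD lZ) !(ipZl, ipNl, ipBl, ipDl) => energy_us three_point_us.
lra.
Qed.

End InnerProduct.

Theorem corollary3p8 (R : realType) (U : completeNormedModType R)
  (ip : U -> U -> R) (H : U -> set U)
  (V' : nat -> U -> U) (M W Z Xi : nat -> U -> U)
  (u : nat -> U) (uh : U) (Uset : set U) (Delta : nat -> R) :
  is_inner_product ip ->
  inv_set H 0 !=set0 ->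
  (forall i, bounded_linear (M i.+1) /\ bounded_linear (W i.+1) /\
             bounded_linear (Z i.+1) /\ bounded_linear (Xi i.+1)) ->
  (forall i, self_adjoint ip (Z i.+1 \o M i.+1) /\
             op_ge ip (Z i.+1 \o M i.+1) (fun _ => 0)) ->
  (forall i, exists2 h, H (u i.+1) h &
      W i.+1 h + V' i.+1 (u i.+1) + M i.+1 (u i.+1 - u i) = 0) ->
  inv_set H 0 uh ->
  (forall i, psub_at ip H (Z i.+1 \o Xi i.+1) (fun x => 2 *: Z i.+1 (W i.+1 x))
                (Z i.+2 \o M i.+2) uh 0 Uset) ->
  (forall i us, inv_set H 0 us ->
     2^-1 * sqnormT ip (Z i.+1 \o M i.+1) (u i.+1 - u i)
     + 2^-1 * sqnormT ip (fun x => Z i.+1 (M i.+1 x + Xi i.+1 x) - Z i.+2 (M i.+2 x))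
                (u i.+1 - us)
     + ipT ip (Z i.+1) (V' i.+1 (u i.+1)) (u i.+1 - us) >= - Delta i.+1) ->
  forall N : nat, (1 <= N)%N -> (forall k, (k <= N)%N -> Uset (u k)) ->
    ((2^-1)%:E * sqdistT ip (Z N.+1 \o M N.+1) (u N) (inv_set H (0%R : U))
     <= (2^-1)%:E * sqdistT ip (Z 1%N \o M 1%N) (u 0%N) (inv_set H (0%R : U))
        + (\sum_(0 <= i < N) Delta i.+1)%R%:E)%E.
Proof.
(* uh in H^{-1}(0) is already part of psub_at. *)
move=> ip_inner _ lin sa inclusion _ psub energy N _ Uu.
pose D k := sqdistT ip (Z k.+1 \o M k.+1) (u k) (inv_set H 0).
have descent : (D N <= D 0%N + (\sum_(0 <= k < N) 2 * Delta k.+1)%:E)%E.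
  apply: lee_telescope => k kN.
  have [[[lM _] [_ [[lZ _] _]]] [sZM _]] := (lin k, sa k).
  exact: sqdistT_step lM lZ sZM (inclusion k) (psub k) (Uu _ kN) (energy k).
rewrite -mulr_sumr in descent.
have half_ge0 : (0 <= (2^-1 : R)%:E)%E by rewrite lee_fin invr_ge0 ler0n.
apply: le_trans (lee_wpmul2l half_ge0 descent) _.
by rewrite muleDr ?fin_num_adde_defl // -EFinM mulrA mulVf ?mul1r.
Qed.
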